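(* For a complex number $p$, $\deg(p)=1$ if and only if $p$ is a nonzero algebraic number. In particular every algebraic number is a period, and every period of degree $\le 1$ is algebraic.
   Context: Let $\overline{\mathbb{Q}}$ denote the field of algebraic numbers. For $n\ge 1$, an admissible domain in $\mathbb{R}^n$ is a subset of $\mathbb{R}^n$ which is a finite union of sets of the form $\{x\in\mathbb{R}^n : P_1(x)\,\square_1\, 0,\dots,P_r(x)\,\square_r\, 0\}$, where each $P_i$ is a polynomial with real algebraic coefficients and each $\square_i\in\{\ge,>\}$, and which has finite Lebesgue measure $\mathrm{vol}_n$. A real number $p$ is a real period if $p=\mathrm{vol}_n(\Sigma_1)-\mathrm{vol}_n(\Sigma_2)$ for some $n\ge1$ and admissible domains $\Sigma_1,\Sigma_2\subseteq\mathbb{R}^n$; a complex number is a period if its real and imaginary parts are real periods. The degree is defined as follows: $\deg(0)=0$; for a nonzero real period $p$, $\deg(p)$ is the least $n\ge 1$ such that $p=\mathrm{vol}_n(\Sigma_1)-\mathrm{vol}_n(\Sigma_2)$ with $\Sigma_1,\Sigma_2$ admissible domains in $\mathbb{R}^n$; for a complex period $p=a+ib$ ($a,b$ real), $\deg(p)=\max(\deg(a),\deg(b))$; for a complex number that is not a period, $\deg(p)=\infty$, with $\infty$ larger than every integer. *)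

From Stdlib Require Import Reals List ZArith.
Open Scope R_scope.

(* A polynomial with integer coefficients, constant term first. *)
Fixpoint Zpoly_evalR (p : list Z) (x : R) : R :=
  match p with nil => 0 | c :: q => IZR c + x * Zpoly_evalR q x end.
Definition Zpoly_nonzero (p : list Z) : Prop := exists c, In c p /\ c <> 0%Z.
Definition real_algebraic (x : R) : Prop :=
  exists p, Zpoly_nonzero p /\ Zpoly_evalR p x = 0.

(* Complex numbers as pairs (real part, imaginary part). *)
Definition Cpx : Type := (R * R)%type.
Definition Cadd (z w : Cpx) : Cpx := (fst z + fst w, snd z + snd w).
Definition Cmul (z w : Cpx) : Cpx :=
  (fst z * fst w - snd z * snd w, fst z * snd w + snd z * fst w).
Fixpoint Zpoly_evalC (p : list Z) (z : Cpx) : Cpx :=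
  match p with nil => (0, 0) | c :: q => Cadd (IZR c, 0) (Cmul z (Zpoly_evalC q z)) end.
Definition algebraic (z : Cpx) : Prop :=
  exists p, Zpoly_nonzero p /\ Zpoly_evalC p z = (0, 0).

(* A point of R^n is represented by x : nat -> R, only coordinates i < n matter. *)
Definition pt := nat -> R.
Fixpoint prodn (n : nat) (f : nat -> R) : R :=
  match n with O => 1 | S k => prodn k f * f k end.
(* monomial c * x_0^(e_0) ... x_{n-1}^(e_{n-1}) *)
Definition monomial : Type := (R * list nat)%type.
Definition mono_eval (n : nat) (m : monomial) (x : pt) : R :=
  fst m * prodn n (fun i => x i ^ nth i (snd m) 0%nat).
Definition mpoly : Type := list monomial.
Definition mpoly_eval (n : nat) (P : mpoly) (x : pt) : R :=
  fold_right (fun m acc => mono_eval n m x + acc) 0 P.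
Definition mpoly_real_alg (P : mpoly) : Prop :=
  Forall (fun m => real_algebraic (fst m)) P.

(* condition P >= 0 (strict = false) or P > 0 (strict = true) *)
Definition condition : Type := (mpoly * bool)%type.
Definition cond_holds (n : nat) (c : condition) (x : pt) : Prop :=
  if snd c then 0 < mpoly_eval n (fst c) x else 0 <= mpoly_eval n (fst c) x.
(* finite union of finite intersections of conditions *)
Definition description : Type := list (list condition).
Definition desc_set (n : nat) (D : description) (x : pt) : Prop :=
  exists B, In B D /\ Forall (fun c => cond_holds n c x) B.
Definition desc_real_alg (D : description) : Prop :=
  Forall (fun B => Forall (fun c => mpoly_real_alg (fst c)) B) D.

Definition box : Type := ((nat -> R) * (nat -> R))%type.
Definition box_ok (n : nat) (b : box) : Prop :=
  forall i, (i < n)%nat -> fst b i <= snd b i.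
Definition in_box (n : nat) (b : box) (x : pt) : Prop :=
  forall i, (i < n)%nat -> fst b i <= x i <= snd b i.
Definition box_vol (n : nat) (b : box) : R := prodn n (fun i => snd b i - fst b i).
Definition cover_sum (n : nat) (S : pt -> Prop) (s : R) : Prop :=
  exists bs : nat -> box,
    (forall k, box_ok n (bs k)) /\
    (forall x, S x -> exists k, in_box n (bs k) x) /\
    infinite_sum (fun k => box_vol n (bs k)) s.
Definition lebesgue_volume (n : nat) (S : pt -> Prop) (v : R) : Prop :=
  (exists s, cover_sum n S s) /\
  (forall s, cover_sum n S s -> v <= s) /\
  (forall w, (forall s, cover_sum n S s -> w <= s) -> w <= v).

Definition admissible (n : nat) (S : pt -> Prop) : Prop :=
  (exists D, desc_real_alg D /\ forall x, S x <-> desc_set n D x) /\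
  (exists v, lebesgue_volume n S v).

Definition real_period_dim (n : nat) (a : R) : Prop :=
  exists S1 S2 v1 v2, admissible n S1 /\ admissible n S2 /\
    lebesgue_volume n S1 v1 /\ lebesgue_volume n S2 v2 /\ a = v1 - v2.
Definition real_period (a : R) : Prop := exists n, (1 <= n)%nat /\ real_period_dim n a.
Definition period (z : Cpx) : Prop := real_period (fst z) /\ real_period (snd z).

Inductive extnat : Type := Fin (n : nat) | Inf.
Definition emax (d e : extnat) : extnat :=
  match d, e with
  | Fin a, Fin b => Fin (Nat.max a b)
  | _, _ => Inf
  end.

Definition real_deg_is (a : R) (d : extnat) : Prop :=
  (a = 0 /\ d = Fin 0) \/
  (a <> 0 /\
    ((exists n, d = Fin n /\ (1 <= n)%nat /\ real_period_dim n a /\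
        forall m, (1 <= m)%nat -> (m < n)%nat -> ~ real_period_dim m a) \/
     (d = Inf /\ forall n, (1 <= n)%nat -> ~ real_period_dim n a))).

Definition deg_is (p : Cpx) (d : extnat) : Prop :=
  exists da db, real_deg_is (fst p) da /\ real_deg_is (snd p) db /\ d = emax da db.

(* An admissible subset of the line is cut out by sign conditions on polynomials with algebraic
   coefficients, so between consecutive real roots of these polynomials it is either full or empty.
   If its volume is finite it contains no ray, hence up to finitely many points it is a finite union
   of open intervals whose endpoints are such roots, and its volume (computed from countable box
   covers through Heine-Borel) is the total length of these intervals.  The roots are algebraic since
   the coefficients are, so every real period of degree one is algebraic.  Conversely an algebraic
   [a >= 0] is the volume of the segment [[0, a]], given by the conditions [x >= 0] and [a - x >= 0].
   A complex number is algebraic iff its real and imaginary parts are, by [Re z = (z + conj z) / 2]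
   and [Im z = (conj z - z) i / 2]. *)

From Stdlib Require Import Reals List Sorted Lra Lia Classical.
Open Scope R_scope.

(** * Interval covers of the line *)

Definition total_length (L : list (R * R)) : R :=
  fold_right (fun p acc => snd p - fst p + acc) 0 L.

Definition intervals_ok (L : list (R * R)) : Prop := Forall (fun p => fst p <= snd p) L.

Definition in_intervals (L : list (R * R)) (x : R) : Prop :=
  exists p, In p L /\ fst p <= x <= snd p.

Lemma total_length_app L1 L2 :
  total_length (L1 ++ L2) = total_length L1 + total_length L2.
Proof. induction L1 as [|p L1 IH]; simpl; [lra | rewrite IH; lra]. Qed.

Lemma total_length_nonneg L : intervals_ok L -> 0 <= total_length L.
Proof. induction 1; simpl; lra. Qed.

Lemma length_le_finite_cover_aux n : forall L, (length L <= n)%nat -> intervals_ok L ->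
  forall a b, a <= b -> (forall x, a <= x <= b -> in_intervals L x) ->
  b - a <= total_length L.
Proof.
  induction n as [|n IH]; intros L HL Hok a b Hab Hcov.
  - destruct L; [|simpl in HL; lia].
    destruct (Hcov a) as [p [[] _]]; lra.
  - destruct (Hcov a) as [[c d] [Hin Ha]]; [lra|]. simpl in Ha.
    destruct (in_split _ _ Hin) as [L1 [L2 ->]].
    apply Forall_app in Hok as [Hok1 Hok2]. inversion Hok2 as [|? ? _ Hok2']; subst.
    assert (Hrest : intervals_ok (L1 ++ L2)) by (apply Forall_app; auto).
    replace (total_length (L1 ++ (c, d) :: L2)) with (d - c + total_length (L1 ++ L2))
      by (rewrite !total_length_app; simpl; lra).
    pose proof (total_length_nonneg _ Hrest).
    destruct (Rle_dec b d) as [Hbd|Hbd]; [lra|].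
    (* [(c, d)] covers [a, d]; the other intervals cover [d + e, b] for every [e > 0] *)
    assert (b - d <= total_length (L1 ++ L2)).
    { apply Rle_plus_epsilon. intros e He.
      destruct (Rle_dec (b - d) e); [lra|].
      enough (b - (d + e) <= total_length (L1 ++ L2)) by lra.
      apply IH; auto; [rewrite length_app in *; simpl in HL; lia | lra |].
      intros x Hx. destruct (Hcov x) as [q [Hq Hqx]]; [lra|].
      apply in_app_or in Hq as [Hq|[<-|Hq]]; simpl in *; try lra;
        exists q; split; auto; apply in_or_app; auto. }
    lra.
Qed.

Lemma length_le_finite_cover L a b : intervals_ok L -> a <= b ->
  (forall x, a <= x <= b -> in_intervals L x) -> b - a <= total_length L.
Proof. intros; eapply length_le_finite_cover_aux; eauto. Qed.

Definition clip_below (t : R) (L : list (R * R)) :=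
  map (fun p => (Rmin (fst p) t, Rmin (snd p) t)) L.
Definition clip_above (t : R) (L : list (R * R)) :=
  map (fun p => (Rmax (fst p) t, Rmax (snd p) t)) L.

Lemma total_length_clip t L :
  total_length L = total_length (clip_below t L) + total_length (clip_above t L).
Proof.
  induction L as [|p L IH]; simpl; [lra|].
  rewrite IH. unfold Rmin, Rmax.
  destruct (Rle_dec (fst p) t), (Rle_dec (snd p) t); lra.
Qed.

Lemma clip_below_ok t L : intervals_ok L -> intervals_ok (clip_below t L).
Proof.
  induction 1; constructor; auto; simpl.
  unfold Rmin; destruct (Rle_dec (fst x) t), (Rle_dec (snd x) t); lra.
Qed.

Lemma clip_above_ok t L : intervals_ok L -> intervals_ok (clip_above t L).
Proof.
  induction 1; constructor; auto; simpl.
  unfold Rmax; destruct (Rle_dec (fst x) t), (Rle_dec (snd x) t); lra.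
Qed.

Lemma in_clip_below t L x : x <= t -> in_intervals L x -> in_intervals (clip_below t L) x.
Proof.
  intros Hx [p [Hp Hpx]]. exists (Rmin (fst p) t, Rmin (snd p) t); split.
  - apply in_map_iff; eauto.
  - simpl; unfold Rmin; destruct (Rle_dec (fst p) t), (Rle_dec (snd p) t); lra.
Qed.

Lemma in_clip_above t L x : t <= x -> in_intervals L x -> in_intervals (clip_above t L) x.
Proof.
  intros Hx [p [Hp Hpx]]. exists (Rmax (fst p) t, Rmax (snd p) t); split.
  - apply in_map_iff; eauto.
  - simpl; unfold Rmax; destruct (Rle_dec (fst p) t), (Rle_dec (snd p) t); lra.
Qed.

Definition separated (I : list (R * R)) : Prop :=
  intervals_ok I /\ StronglySorted (fun p q => snd p < fst q) I.

Lemma separated_length_le_finite_cover I L : separated I -> intervals_ok L ->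
  (forall p x, In p I -> fst p <= x <= snd p -> in_intervals L x) ->
  total_length I <= total_length L.
Proof.
  revert L. induction I as [|[a b] I IH]; intros L [Hok Hsort] HL Hcov.
  - apply total_length_nonneg; auto.
  - inversion Hok as [|? ? Hab Hok']; inversion Hsort as [|? ? Hsort' Hright]; subst.
    rewrite Forall_forall in Hright. simpl in *.
    rewrite (total_length_clip b L).
    assert (b - a <= total_length (clip_below b L)).
    { apply length_le_finite_cover; auto using clip_below_ok.
      intros x Hx. apply in_clip_below; [lra|]. apply (Hcov (a, b)); auto. }
    assert (total_length I <= total_length (clip_above b L)).
    { apply IH; [split; auto | apply clip_above_ok; auto |].
      intros p x Hp Hx. specialize (Hright p Hp). simpl in Hright.
      apply in_clip_above; [lra|]. apply (Hcov p); auto. }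
    lra.
Qed.

Lemma heine_borel (u w : nat -> R) a b : a <= b ->
  (forall x, a <= x <= b -> exists k, u k < x < w k) ->
  exists N, forall x, a <= x <= b -> exists k, (k <= N)%nat /\ u k < x < w k.
Proof.
  intros Hab Hcov.
  set (E := fun x => a <= x <= b /\ exists N, forall y, a <= y <= x ->
                      exists k, (k <= N)%nat /\ u k < y < w k).
  assert (HaE : E a).
  { destruct (Hcov a) as [k Hk]; [lra|]. split; [lra|].
    exists k; intros y Hy; exists k; split; [lia|]. replace y with a by lra; auto. }
  assert (Hb : bound E) by (exists b; intros x [Hx _]; lra).
  destruct (completeness E Hb (ex_intro _ a HaE)) as [c [Hub Hlub]].
  assert (Hac : a <= c) by (apply Hub; auto).
  assert (Hcb : c <= b) by (apply Hlub; intros x [Hx _]; lra).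
  destruct (Hcov c) as [k0 Hk0]; [lra|].
  (* some x in E lies in the interval (u k0, w k0) around the supremum c *)
  assert (Hx : exists x, E x /\ u k0 < x).
  { apply NNPP; intro Hn.
    enough (c <= u k0) by lra.
    apply Hlub. intros x Hxe. apply Rnot_lt_le. intro. apply Hn; eauto. }
  destruct Hx as [x [[Hxab [N HN]] Hux]].
  assert (Hxc : x <= c) by (apply Hub; split; eauto).
  set (y := Rmin b ((c + w k0) / 2)).
  assert (Hy : c <= y <= b) by (unfold y, Rmin; destruct Rle_dec; lra).
  assert (HyE : forall z, a <= z <= y -> exists k, (k <= Nat.max N k0)%nat /\ u k < z < w k).
  { intros z Hz. destruct (Rle_dec z x).
    - destruct (HN z) as [k [Hk1 Hk2]]; [lra|]. exists k; split; auto; lia.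
    - exists k0; split; [lia|]. unfold y, Rmin in Hz; destruct Rle_dec; lra. }
  assert (y <= c) by (apply Hub; split; [lra|]; eauto).
  assert (Hyb : y = b) by (unfold y, Rmin in *; destruct Rle_dec; lra).
  exists (Nat.max N k0). intros z Hz. apply HyE. lra.
Qed.

Lemma finite_subcover (u w : nat -> R) (I : list (R * R)) :
  (forall p x, In p I -> fst p <= x <= snd p -> exists k, u k < x < w k) ->
  exists N, forall p x, In p I -> fst p <= x <= snd p ->
    exists k, (k <= N)%nat /\ u k < x < w k.
Proof.
  induction I as [|p I IH]; intros Hcov.
  - exists O; intros p x [].
  - destruct IH as [N1 HN1]; [intros q x Hq; apply Hcov; simpl; auto|].
    destruct (Rle_dec (fst p) (snd p)) as [Hp|Hp].
    + destruct (heine_borel u w (fst p) (snd p) Hp) as [N2 HN2];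
        [intros x Hx; apply (Hcov p); simpl; auto|].
      exists (Nat.max N1 N2). intros q x [<-|Hq] Hx.
      * destruct (HN2 x Hx) as [k [Hk1 Hk2]]; exists k; split; auto; lia.
      * destruct (HN1 q x Hq Hx) as [k [Hk1 Hk2]]; exists k; split; auto; lia.
    + exists N1. intros q x [<-|Hq] Hx; [lra | apply (HN1 q); auto].
Qed.

Lemma total_length_map_seq (f : nat -> R * R) N :
  total_length (map f (seq 0 (S N))) = sum_f_R0 (fun k => snd (f k) - fst (f k)) N.
Proof.
  induction N as [|N IH]; [simpl; lra|].
  rewrite seq_S, map_app, total_length_app, IH. simpl. lra.
Qed.

Lemma sum_geometric_le e N : 0 <= e -> sum_f_R0 (fun k => e * (/ 2) ^ S k) N <= e.
Proof.
  intros He. enough (sum_f_R0 (fun k => e * (/ 2) ^ S k) N = e * (1 - (/ 2) ^ S N)).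
  { rewrite H. pose proof (pow_lt (/ 2) (S N)). nra. }
  induction N as [|N IH]; simpl in *; [field | rewrite IH; field].
Qed.

Lemma partial_sum_le (f : nat -> R) s : (forall k, 0 <= f k) -> infinite_sum f s ->
  forall N, sum_f_R0 f N <= s.
Proof.
  intros Hf Hs N. apply growing_ineq; auto.
  intro n; simpl; specialize (Hf (S n)); lra.
Qed.

Lemma separated_length_le_countable_cover (c d : nat -> R) s I :
  (forall k, c k <= d k) -> infinite_sum (fun k => d k - c k) s -> separated I ->
  (forall p x, In p I -> fst p <= x <= snd p -> exists k, c k <= x <= d k) ->
  total_length I <= s.
Proof.
  intros Hcd Hs HI Hcov. apply Rle_plus_epsilon. intros e He.
  (* enlarge the k-th interval by e / 2^(k+2) on each side, so that they become open *)
  set (g := fun k => (e / 2) * (/ 2) ^ S k).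
  assert (Hg : forall k, 0 < g k) by (intro k; apply Rmult_lt_0_compat; [lra | apply pow_lt; lra]).
  set (f := fun k => (c k - g k, d k + g k)).
  destruct (finite_subcover (fun k => fst (f k)) (fun k => snd (f k)) I) as [N HN].
  { intros p x Hp Hx. destruct (Hcov p x Hp Hx) as [k Hk].
    exists k; specialize (Hg k); simpl; lra. }
  assert (Hfin : total_length I <= total_length (map f (seq 0 (S N)))).
  { apply separated_length_le_finite_cover; auto.
    - apply Forall_forall. intros p Hp. apply in_map_iff in Hp as [k [<- _]].
      specialize (Hcd k); specialize (Hg k); simpl; lra.
    - intros p x Hp Hx. destruct (HN p x Hp Hx) as [k [Hk1 Hk2]].
      exists (f k); split; [|lra]. apply in_map, in_seq; lia. }
  rewrite total_length_map_seq in Hfin.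
  assert (Hsplit : sum_f_R0 (fun k => snd (f k) - fst (f k)) N
                   = sum_f_R0 (fun k => d k - c k) N + 2 * sum_f_R0 g N).
  { clear. induction N as [|N IH]; simpl in *; [|rewrite IH]; lra. }
  pose proof (sum_geometric_le (e / 2) N ltac:(lra)).
  pose proof (partial_sum_le (fun k => d k - c k) s ltac:(intro k; specialize (Hcd k); lra) Hs N).
  unfold g in Hsplit. lra.
Qed.

(** * Volumes of subsets of the line *)

Lemma box_vol_dim1 b : box_vol 1 b = snd b 0%nat - fst b 0%nat.
Proof. unfold box_vol; simpl; ring. Qed.

Lemma in_box_dim1 b x : in_box 1 b x <-> fst b 0%nat <= x 0%nat <= snd b 0%nat.
Proof.
  split; intros H; [apply H; lia|].
  intros i Hi; replace i with 0%nat by lia; auto.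
Qed.

Lemma box_ok_dim1 b : box_ok 1 b <-> fst b 0%nat <= snd b 0%nat.
Proof.
  split; intros H; [apply H; lia|].
  intros i Hi; replace i with 0%nat by lia; auto.
Qed.

Lemma cover_sum_ge_separated (S : pt -> Prop) s I : cover_sum 1 S s -> separated I ->
  (forall p x, In p I -> fst p <= x <= snd p -> S (fun _ => x)) -> total_length I <= s.
Proof.
  intros [bs [Hok [Hcov Hsum]]] HI HS.
  apply (separated_length_le_countable_cover
           (fun k => fst (bs k) 0%nat) (fun k => snd (bs k) 0%nat) s I); auto.
  - intro k; exact (proj1 (box_ok_dim1 _) (Hok k)).
  - intros eps Heps. destruct (Hsum eps Heps) as [N HN]. exists N. intros n Hn.
    rewrite <- (sum_eq (fun k => box_vol 1 (bs k))); auto. intros; apply box_vol_dim1.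
  - intros p x Hp Hx. destruct (Hcov _ (HS p x Hp Hx)) as [k Hk].
    exists k. apply in_box_dim1 in Hk. auto.
Qed.

Lemma cover_sum_ge_interval (S : pt -> Prop) s a b : cover_sum 1 S s -> a <= b ->
  (forall x, a <= x <= b -> S (fun _ => x)) -> b - a <= s.
Proof.
  intros Hc Hab HS.
  replace (b - a) with (total_length ((a, b) :: nil)) by (simpl; ring).
  apply (cover_sum_ge_separated S); auto.
  - split; [constructor; [simpl; lra | constructor] | constructor; constructor].
  - intros p x [<-|[]]; auto.
Qed.

(* Beyond the end of [L], [nth] pads with the degenerate box [[0, 0]]. *)
Definition boxes_of (L : list (R * R)) (k : nat) : box :=
  (fun _ => fst (nth k L (0, 0)), fun _ => snd (nth k L (0, 0))).

Lemma boxes_of_partial_sum L n : (length L <= S n)%nat ->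
  sum_f_R0 (fun k => box_vol 1 (boxes_of L k)) n = total_length L.
Proof.
  revert n. induction L as [|p L IH]; intros n Hn.
  - induction n as [|n IHn]; simpl in *; rewrite box_vol_dim1; simpl; [|rewrite IHn by lia]; lra.
  - destruct n as [|n].
    + destruct L; [|simpl in Hn; lia]. simpl. rewrite box_vol_dim1. simpl. lra.
    + rewrite decomp_sum by lia. simpl pred.
      change (total_length (p :: L)) with (snd p - fst p + total_length L).
      rewrite <- (IH n) by (simpl in Hn; lia).
      rewrite box_vol_dim1. f_equal.
Qed.

Lemma boxes_of_sum L : infinite_sum (fun k => box_vol 1 (boxes_of L k)) (total_length L).
Proof.
  intros eps Heps. exists (length L). intros n Hn.
  rewrite boxes_of_partial_sum by lia. unfold Rdist. rewrite Rminus_diag, Rabs_R0. lra.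
Qed.

Lemma cover_sum_finite (S : pt -> Prop) L : intervals_ok L ->
  (forall x, S x -> in_intervals L (x 0%nat)) -> cover_sum 1 S (total_length L).
Proof.
  intros HL HS. exists (boxes_of L). split; [|split; [|apply boxes_of_sum]].
  - intro k. apply box_ok_dim1. unfold boxes_of; simpl.
    destruct (Nat.lt_ge_cases k (length L)) as [Hk|Hk].
    + exact (proj1 (Forall_forall _ L) HL _ (nth_In L (0, 0) Hk)).
    + rewrite nth_overflow by auto; simpl; lra.
  - intros x Hx. destruct (HS x Hx) as [p [Hp Hpx]].
    destruct (In_nth L p (0, 0) Hp) as [k [_ Hk]].
    exists k. apply in_box_dim1; unfold boxes_of; simpl. rewrite Hk; auto.
Qed.

Definition open_separated (I : list (R * R)) : Prop :=
  Forall (fun p => fst p < snd p) I /\ StronglySorted (fun p q => snd p <= fst q) I.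

Section Shrink.
Variable d : R.
Hypothesis d_pos : 0 < d.

Definition margin (p : R * R) : R := Rmin d ((snd p - fst p) / 3).

Lemma margin_pos p : fst p < snd p -> 0 < margin p.
Proof. intros; apply Rmin_glb_lt; lra. Qed.

Lemma margin_le p : margin p <= d /\ margin p <= (snd p - fst p) / 3.
Proof. split; [apply Rmin_l | apply Rmin_r]. Qed.

Definition shrink (I : list (R * R)) : list (R * R) :=
  map (fun p => (fst p + margin p, snd p - margin p)) I.

Lemma shrink_separated I : open_separated I -> separated (shrink I).
Proof.
  induction I as [|p I IH]; intros [Hlt Hsort]; [split; constructor|].
  inversion Hlt as [|? ? Hp Hlt']; inversion Hsort as [|? ? Hsort' Hright]; subst.
  destruct (IH (conj Hlt' Hsort')) as [Hok Hs].
  pose proof (margin_pos p Hp); pose proof (margin_le p).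
  split; constructor; auto; simpl; try lra.
  apply Forall_forall. intros q Hq. apply in_map_iff in Hq as [q' [<- Hq']]. simpl.
  pose proof (proj1 (Forall_forall _ _) Hright q' Hq').
  pose proof (margin_pos q' (proj1 (Forall_forall _ _) Hlt' q' Hq')). lra.
Qed.

Lemma shrink_length I : open_separated I ->
  total_length I - 2 * d * INR (length I) <= total_length (shrink I).
Proof.
  intros [Hlt _]. induction Hlt as [|p I Hp _ IH]; [simpl; lra|].
  pose proof (margin_le p).
  replace (INR (length (p :: I))) with (INR (length I) + 1) by (cbn [length]; rewrite S_INR; ring).
  simpl in *. lra.
Qed.

Lemma in_shrink I q x : Forall (fun p => fst p < snd p) I -> In q (shrink I) ->
  fst q <= x <= snd q -> exists p, In p I /\ fst p < x < snd p.
Proof.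
  intros Hlt Hq Hx. apply in_map_iff in Hq as [p [<- Hp]]. exists p; split; auto.
  pose proof (margin_pos p (proj1 (Forall_forall _ _) Hlt p Hp)). simpl in Hx. lra.
Qed.

End Shrink.

Lemma lebesgue_volume_open_intervals (S : pt -> Prop) I F : open_separated I ->
  (forall p x, In p I -> fst p < x 0%nat < snd p -> S x) ->
  (forall x, S x -> In (x 0%nat) F \/ in_intervals I (x 0%nat)) ->
  lebesgue_volume 1 S (total_length I).
Proof.
  intros HI Hin Hout.
  assert (Hcov : cover_sum 1 S (total_length I)).
  { set (L := I ++ map (fun z => (z, z)) F).
    assert (Hpoints : total_length (map (fun z => (z, z)) F) = 0)
      by (clear; induction F as [|z F IH]; simpl in *; lra).
    replace (total_length I) with (total_length L)
      by (unfold L; rewrite total_length_app, Hpoints; lra).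
    apply cover_sum_finite.
    - apply Forall_app; split.
      + eapply Forall_impl; [|apply HI]. intros; lra.
      + apply Forall_forall. intros p Hp. apply in_map_iff in Hp as [z [<- _]]. simpl; lra.
    - intros x Hx. destruct (Hout x Hx) as [HF|[p [Hp Hpx]]].
      + exists (x 0%nat, x 0%nat). split; [|simpl; lra].
        apply in_or_app; right. apply in_map with (f := fun z => (z, z)); auto.
      + exists p. split; auto. apply in_or_app; auto. }
  split; [eauto | split; [|intros w Hw; apply Hw; auto]].
  intros s Hs. apply Rle_plus_epsilon. intros e He.
  pose proof (pos_INR (length I)).
  set (d := e / (2 * INR (length I) + 1)).
  assert (Hd : 0 < d) by (unfold d; apply Rdiv_lt_0_compat; lra).
  assert (Hde : 2 * d * INR (length I) <= e).
  { unfold d. apply (Rmult_le_reg_r (2 * INR (length I) + 1)); [lra|].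
    field_simplify; [nra | lra]. }
  pose proof (shrink_length d I HI).
  enough (total_length (shrink d I) <= s) by lra.
  apply (cover_sum_ge_separated S); auto using shrink_separated.
  intros q x Hq Hx. destruct (in_shrink d Hd I q x (proj1 HI) Hq Hx) as [p [Hp Hpx]].
  apply (Hin p); auto.
Qed.

Lemma cover_sum_not_long (S : pt -> Prop) s a : cover_sum 1 S s ->
  ~ (forall x, a <= x <= a + Rabs s + 1 -> S (fun _ => x)).
Proof.
  intros Hc HS. pose proof (Rle_abs s). pose proof (Rabs_pos s).
  pose proof (cover_sum_ge_interval S s a (a + Rabs s + 1) Hc ltac:(lra) HS). lra.
Qed.

Lemma sorted_enumeration (Z : list R) :
  exists zs, StronglySorted Rlt zs /\ forall w, In w zs <-> In w Z.
Proof.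
  induction Z as [|a Z [zs [Hs Hin]]]; [exists nil; split; [constructor | tauto]|].
  enough (exists zs', StronglySorted Rlt zs' /\ forall w, In w zs' <-> a = w \/ In w zs)
    as [zs' [Hs' Hin']] by (exists zs'; split; auto; intro w; rewrite Hin', Hin; simpl; tauto).
  clear Hin. induction Hs as [|z zs Hs IH Hz].
  - exists (a :: nil). split; [repeat constructor | simpl; tauto].
  - destruct (Rtotal_order a z) as [Hl|[<-|Hg]].
    + exists (a :: z :: zs). split; [|simpl; tauto].
      repeat constructor; auto. apply Forall_forall. intros y Hy.
      pose proof (proj1 (Forall_forall _ _) Hz y Hy). lra.
    + exists (a :: zs). split; [constructor; auto | simpl; tauto].
    + destruct IH as [zs' [Hs' Hin']]. exists (z :: zs'). split.
      * constructor; auto. apply Forall_forall. intros y Hy.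
        apply Hin' in Hy as [<-|Hy]; auto. exact (proj1 (Forall_forall _ _) Hz y Hy).
      * intro w; simpl; rewrite Hin'; tauto.
Qed.

Lemma lebesgue_volume_unique n S v1 v2 :
  lebesgue_volume n S v1 -> lebesgue_volume n S v2 -> v1 = v2.
Proof. intros [_ [H1 H1']] [_ [H2 H2']]. apply Rle_antisym; auto. Qed.

Section LocallyConstant.
Variable T : R -> Prop.
Variable Z : list R.
Hypothesis T_const : forall x y, x < y -> (forall w, In w Z -> ~ x <= w <= y) -> (T x <-> T y).

Lemma T_const_between z z' : (forall w, In w Z -> w <= z \/ z' <= w) ->
  forall x y, z < x < z' -> z < y < z' -> (T x <-> T y).
Proof.
  intros Hgap x y Hx Hy.
  destruct (Rtotal_order x y) as [Hxy|[<-|Hxy]]; [| tauto | symmetry];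
    apply T_const; auto; intros w Hw Hw'; destruct (Hgap w Hw); lra.
Qed.

Lemma gap_decomposition : forall t z, StronglySorted Rlt (z :: t) ->
  (forall w, In w Z -> In w (z :: t) \/ w < z) ->
  exists I, open_separated I /\
    Forall (fun p => In (fst p) (z :: t) /\ In (snd p) (z :: t)) I /\
    (forall p x, In p I -> fst p < x < snd p -> T x) /\
    (forall x, T x -> z <= x -> (exists w, In w (z :: t) /\ x <= w) ->
       In x (z :: t) \/ in_intervals I x).
Proof.
  induction t as [|z' t IH]; intros z Hs HZ.
  - exists nil. split; [split; constructor|]. repeat split; [constructor | intros ? ? [] |].
    intros x _ Hz [w [[<-|[]] Hw]]. left; left; lra.
  - apply StronglySorted_inv in Hs as [Hs Hz]. rewrite Forall_forall in Hz.
    assert (Hzz' : z < z') by (apply Hz; simpl; auto).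
    pose proof (StronglySorted_inv Hs) as [_ Hz'']. rewrite Forall_forall in Hz''.
    destruct (IH z' Hs) as [I' [[HI'lt HI'sort] [HI'end [HI'in HI'out]]]].
    { intros w Hw. destruct (HZ w Hw) as [[->|H]|H]; auto; right; lra. }
    assert (Hgap : forall x y, z < x < z' -> z < y < z' -> (T x <-> T y)).
    { apply T_const_between. intros w Hw.
      destruct (HZ w Hw) as [[->|[->|Hw']]|Hw']; try lra. specialize (Hz'' w Hw'); lra. }
    assert (Hend : Forall (fun p => In (fst p) (z :: z' :: t) /\ In (snd p) (z :: z' :: t)) I').
    { eapply Forall_impl; [|exact HI'end]. simpl; tauto. }
    assert (Hright : forall x, T x -> z' < x -> (exists w, In w (z :: z' :: t) /\ x <= w) ->
                      In x (z :: z' :: t) \/ in_intervals I' x).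
    { intros x Hx Hx' [w [Hw Hxw]]. destruct (HI'out x Hx) as [H|H]; [lra| |simpl; tauto|auto].
      exists w; split; auto. destruct Hw as [<-|Hw]; auto; lra. }
    (* the gap (z, z') lies in T or misses it, according to its midpoint *)
    set (mid := (z + z') / 2).
    destruct (classic (T mid)) as [Hm|Hm].
    + exists ((z, z') :: I'). split; [|split; [constructor; simpl; auto|split]].
      * split; constructor; auto; simpl.
        apply Forall_forall. intros p Hp.
        destruct (proj1 (Forall_forall _ _) HI'end p Hp) as [[<-|Hq] _]; [lra|].
        specialize (Hz'' _ Hq); lra.
      * intros p x [<-|Hp] Hx; [|eapply HI'in; eauto].
        apply (Hgap mid x); unfold mid in *; simpl in *; auto; lra.
      * intros x Hx Hz0 Hw. destruct (Rle_dec x z') as [Hle|Hgt].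
        -- destruct (Req_dec x z) as [->|Hne]; [simpl; auto|].
           destruct (Req_dec x z') as [->|Hne']; [simpl; auto|].
           right. exists (z, z'); simpl; split; [auto|lra].
        -- destruct (Hright x Hx ltac:(lra) Hw) as [H|[p [Hp Hpx]]]; auto.
           right. exists p; simpl; auto.
    + exists I'. split; [split; auto|split; [auto|split; auto]].
      intros x Hx Hz0 Hw. destruct (Rle_dec x z') as [Hle|Hgt].
      * destruct (Req_dec x z) as [->|Hne]; [simpl; auto|].
        destruct (Req_dec x z') as [->|Hne']; [simpl; auto|].
        exfalso. apply Hm. apply (Hgap x mid); unfold mid; auto; lra.
      * apply Hright; auto; lra.
Qed.

Lemma volume_locally_constant (S : pt -> Prop) v : Z <> nil ->
  (forall x, S x <-> T (x 0%nat)) -> lebesgue_volume 1 S v ->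
  exists I, v = total_length I /\ Forall (fun p => In (fst p) Z /\ In (snd p) Z) I.
Proof.
  intros HZ HST Hv.
  destruct (sorted_enumeration Z) as [[|z t] [Hs Hin]].
  { destruct Z as [|a Z']; [congruence|]. exfalso. apply (proj2 (Hin a)); simpl; auto. }
  destruct (gap_decomposition t z Hs) as [I [HI [Hend [HIin HIout]]]].
  { intros w Hw; left; apply Hin; auto. }
  assert (Hmin : forall w, In w Z -> z <= w).
  { intros w Hw. apply Hin in Hw as [<-|Hw]; [lra|].
    apply StronglySorted_inv in Hs as [_ Hz]. pose proof (proj1 (Forall_forall _ _) Hz w Hw); lra. }
  pose proof Hv as [[s Hcs] _].
  (* a point of S outside [min Z, max Z] would put a whole ray into S *)
  assert (Hbounded : forall x, S x ->
            z <= x 0%nat /\ exists w, In w (z :: t) /\ x 0%nat <= w).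
  { intros x Hx. apply HST in Hx. split.
    - apply Rnot_lt_le. intro Hlt.
      apply (cover_sum_not_long S s (x 0%nat - Rabs s - 1) Hcs). intros y Hy. apply HST.
      destruct (Req_dec y (x 0%nat)) as [->|Hne]; auto.
      apply (T_const y (x 0%nat)); auto; [lra|].
      intros w Hw Hw'. specialize (Hmin w Hw). lra.
    - apply NNPP. intro Hn.
      apply (cover_sum_not_long S s (x 0%nat) Hcs). intros y Hy. apply HST.
      destruct (Req_dec y (x 0%nat)) as [->|Hne]; auto.
      apply (T_const (x 0%nat) y); auto; [lra|].
      intros w Hw Hw'. apply Hn. exists w. split; [apply Hin; auto | lra]. }
  exists I. split.
  - apply (lebesgue_volume_unique 1 S); auto.
    apply (lebesgue_volume_open_intervals S I (z :: t)); auto.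
    + intros p x Hp Hx. apply HST, (HIin p); auto.
    + intros x Hx. destruct (Hbounded x Hx) as [H1 H2]. apply HIout; auto. apply HST; auto.
  - eapply Forall_impl; [|exact Hend]. simpl. intros p [H1 H2]. split; apply Hin; auto.
Qed.

End LocallyConstant.

(** * Admissible subsets of the line *)

Definition mpoly_eval1 (P : mpoly) (t : R) : R := mpoly_eval 1 P (fun _ => t).

Lemma mpoly_eval_dim1 P x : mpoly_eval 1 P x = mpoly_eval1 P (x 0%nat).
Proof.
  induction P as [|m P IH]; [reflexivity|].
  unfold mpoly_eval1 in *; simpl. rewrite IH. reflexivity.
Qed.

Definition zeros_within (P : mpoly) (Z : list R) : Prop :=
  (forall t, mpoly_eval1 P t = 0) \/ (forall t, mpoly_eval1 P t = 0 -> In t Z).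

Lemma zeros_within_incl P Z Z' : incl Z Z' -> zeros_within P Z -> zeros_within P Z'.
Proof. intros HZ [H|H]; [left | right]; auto. Qed.

Lemma mpoly_eval1_continuous P : continuity (mpoly_eval1 P).
Proof.
  induction P as [|m P IH].
  - apply continuity_const. intros a b; reflexivity.
  - apply (continuity_plus (fun t => fst m * (1 * t ^ nth 0 (snd m) 0%nat))); auto.
    apply continuity_scal, continuity_scal, derivable_continuous, derivable_pow.
Qed.

Lemma sign_constant f x y : continuity f -> x < y -> (forall t, x <= t <= y -> f t <> 0) ->
  (0 < f x <-> 0 < f y) /\ (0 <= f x <-> 0 <= f y).
Proof.
  intros Hf Hxy Hnz.
  assert (Hpos : 0 < f x * f y).
  { apply Rnot_le_lt. intro Hle.
    destruct (IVT_cor f x y Hf ltac:(lra) Hle) as [z [Hz Hfz]]. apply (Hnz z); auto. }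
  assert (f x <> 0) by (apply Hnz; lra). assert (f y <> 0) by (apply Hnz; lra).
  destruct (Rtotal_order (f x) 0) as [Hx|[Hx|Hx]], (Rtotal_order (f y) 0) as [Hy|[Hy|Hy]];
    try lra; nra.
Qed.

Lemma desc_set_dim1 D x : desc_set 1 D x <-> desc_set 1 D (fun _ => x 0%nat).
Proof.
  unfold desc_set, cond_holds.
  split; intros [B [HB Hc]]; exists B; split; auto; rewrite Forall_forall in *;
    intros c Hcc; specialize (Hc c Hcc); rewrite !mpoly_eval_dim1 in *; auto.
Qed.

Lemma admissible_dim1_volume (S : pt -> Prop) D Z v :
  (forall x, S x <-> desc_set 1 D x) ->
  (forall B c, In B D -> In c B -> zeros_within (fst c) Z) ->
  lebesgue_volume 1 S v ->
  exists I, v = total_length I /\ Forall (fun p => In (fst p) (0 :: Z) /\ In (snd p) (0 :: Z)) I.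
Proof.
  intros HSD HZ Hv.
  (* the breakpoint [0] only makes the list nonempty *)
  apply (volume_locally_constant (fun t => desc_set 1 D (fun _ => t)) (0 :: Z)) with S;
    [| discriminate | intros x; rewrite HSD; apply desc_set_dim1 | auto].
  intros x y Hxy Hgap. unfold desc_set.
  enough (Hc : forall B c, In B D -> In c B ->
            (cond_holds 1 c (fun _ => x) <-> cond_holds 1 c (fun _ => y))).
  { split; intros [B [HB HF]]; exists B; split; auto; rewrite Forall_forall in *;
      intros c Hcc; specialize (Hc B c HB Hcc); specialize (HF c Hcc); tauto. }
  intros B c HB Hcc. unfold cond_holds. rewrite !mpoly_eval_dim1.
  destruct (HZ B c HB Hcc) as [H0|Hroots]; [rewrite !H0; tauto|].
  destruct (sign_constant (mpoly_eval1 (fst c)) x y (mpoly_eval1_continuous _) Hxy) as [Hlt Hle].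
  - intros t Ht H0. apply (Hgap t); [right; apply Hroots|]; auto.
  - destruct (snd c); auto.
Qed.

Lemma real_period_dim_opp n a : real_period_dim n a -> real_period_dim n (- a).
Proof.
  intros [S1 [S2 [v1 [v2 [H1 [H2 [Hv1 [Hv2 ->]]]]]]]].
  exists S2, S1, v2, v1. do 4 (split; auto). ring.
Qed.

Lemma real_algebraic_Z (c : Z) : real_algebraic (IZR c).
Proof.
  exists ((- c)%Z :: 1%Z :: nil). split; [exists 1%Z; simpl; split; auto; discriminate|].
  simpl. rewrite opp_IZR. ring.
Qed.

Definition segment (a : R) : pt -> Prop := fun x => 0 <= x 0%nat <= a.

(* [0 <= x] and [0 <= a - x], as polynomial conditions *)
Definition segment_desc (a : R) : description :=
  ((((1, 1%nat :: nil) :: nil), false) ::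
   (((a, nil) :: (-1, 1%nat :: nil) :: nil), false) :: nil) :: nil.

Lemma segment_volume a : 0 <= a -> lebesgue_volume 1 (segment a) a.
Proof.
  intros Ha. replace a with (total_length ((0, a) :: nil)) at 2 by (simpl; ring).
  destruct (Req_dec a 0) as [->|Hne].
  - replace (total_length ((0, 0) :: nil)) with (total_length nil) by (simpl; ring).
    apply (lebesgue_volume_open_intervals _ nil (0 :: nil)); [split; constructor | intros ? ? [] |].
    intros x Hx. left. unfold segment in Hx. simpl. left. lra.
  - apply (lebesgue_volume_open_intervals _ _ nil).
    + split; repeat constructor; simpl; lra.
    + intros p x [<-|[]] Hx. unfold segment. simpl in Hx. lra.
    + intros x Hx. right. exists (0, a). simpl. auto.
Qed.

Lemma segment_admissible a : 0 <= a -> real_algebraic a -> admissible 1 (segment a).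
Proof.
  intros Ha Halg. split; [|exists a; apply segment_volume; auto].
  exists (segment_desc a). split.
  - repeat constructor; simpl; auto; [apply (real_algebraic_Z 1) | apply (real_algebraic_Z (-1))].
  - intros x. unfold segment, desc_set. split.
    + intros Hx. exists (hd nil (segment_desc a)). split; [left; reflexivity|].
      unfold cond_holds, mpoly_eval, mono_eval; simpl.
      constructor; [simpl; lra | constructor; [simpl; lra | constructor]].
    + intros [B [[<-|[]] HB]]. inversion HB as [|? ? H1 HB']; inversion HB' as [|? ? H2 _].
      unfold cond_holds, mpoly_eval, mono_eval in *; simpl in *. lra.
Qed.

Lemma real_period_dim1_segment a : 0 <= a -> real_algebraic a -> real_period_dim 1 a.
Proof.
  intros Ha Halg. exists (segment a), (segment 0), a, 0.
  split; [apply segment_admissible; auto|].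
  split; [apply segment_admissible; [lra | apply (real_algebraic_Z 0)]|].
  split; [apply segment_volume; auto|].
  split; [apply segment_volume; lra | ring].
Qed.

(** * Algebraic numbers *)

From mathcomp Require Import all_boot all_algebra.
From mathcomp Require Import Rstruct polyrcf complex ssrZ.
Set Implicit Arguments. Unset Strict Implicit.
Import GRing.Theory.

Section Algebraic.
Local Open Scope ring_scope.

Lemma IZR_intr (c : Z) : IZR c = (int_of_Z c)%:~R.
Proof.
  have pos p : IPR p = (Pos.to_nat p)%:R by rewrite -INR_IPR INRE.
  case: c => [|p|p] //=; first exact: pos.
  rewrite NegzE prednK; last exact/ssrnat.ltP/Pos2Nat.is_pos.
  by rewrite mulrNz -pmulrn -pos.
Qed.

Lemma InP (T : eqType) (x : T) (s : seq T) : reflect (In x s) (x \in s).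
Proof.
  elim: s => [|y s IH]; first by constructor.
  rewrite in_cons; apply: (iffP orP) => [[/eqP ->|/IH]|[->|/IH]]; by [left|right|left|right].
Qed.

Definition to_complex (z : Cpx) : R[i] := (fst z +i* snd z)%C.

Lemma to_complex_inj : injective to_complex.
Proof. by move=> [a b] [c d] [/= -> ->]. Qed.

Lemma to_complex_add z w : to_complex (Cadd z w) = to_complex z + to_complex w.
Proof. by case: z w => [a b] [c d]. Qed.

Lemma to_complex_mul z w : to_complex (Cmul z w) = to_complex z * to_complex w.
Proof. by case: z w => [a b] [c d]. Qed.

Lemma to_complex_real a : to_complex (a, IZR Z0) = (a%:C)%C.
Proof. by []. Qed.

Definition Zpoly_rat (p : list Z) : {poly rat} := Poly (map (fun c => (int_of_Z c)%:~R) p).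

Lemma to_complex_Zpoly_evalC p z :
  to_complex (Zpoly_evalC p z) = (map_poly ratr (Zpoly_rat p)).[to_complex z].
Proof.
  rewrite map_Poly horner_Poly -map_comp.
  elim: p => [|c p IH] //=.
  by rewrite to_complex_add to_complex_mul IH to_complex_real IZR_intr rmorph_int ratr_int
    addrC mulrC.
Qed.

Lemma Zpoly_nonzero_rat p : Zpoly_nonzero p <-> Zpoly_rat p != 0.
Proof.
  split.
  - move=> [c [/InP /(nthP Z0) [i Hi <-] Hc0]].
    apply/eqP => /(congr1 (fun q : {poly rat} => q`_i)).
    rewrite coef_Poly coef0 (nth_map Z0) // => /eqP; rewrite intr_eq0 => /eqP Hi0.
    by apply: Hc0; rewrite -[nth _ _ _]int_of_ZK Hi0.
  - move=> Hnz; apply: NNPP => Hzero; move/eqP: Hnz; apply.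
    apply/polyP => i; rewrite coef_Poly coef0.
    have [Hi|Hi] := ltnP i (size p); last by rewrite nth_default ?size_map.
    rewrite (nth_map Z0) //.
    have [->//|Hc] := eqVneq (nth Z0 p i) Z0.
    by case: Hzero; exists (nth Z0 p i); split => //; [apply/InP; rewrite mem_nth | apply/eqP].
Qed.

Lemma algebraic_to_complex z : algebraic z <-> algebraicOver ratr (to_complex z).
Proof.
  split.
  - move=> [p [/Zpoly_nonzero_rat Hnz Hroot]]; exists (Zpoly_rat p) => //.
    by rewrite rootE -to_complex_Zpoly_evalC Hroot.
  - move=> [q Hq Hroot].
    have [q' [a Ha Hqq']] := rat_poly_scale q.
    have Hrat : Zpoly_rat (map Z_of_int q') = map_poly intr q'.
    { rewrite /Zpoly_rat -map_comp map_polyE; congr Poly; apply: eq_map => c /=.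
      by rewrite Z_of_intK. }
    exists (map Z_of_int q'); split.
    + apply/Zpoly_nonzero_rat; rewrite Hrat.
      by apply: contra Hq => /eqP Hq0; rewrite Hqq' Hq0 scaler0.
    + apply: to_complex_inj; rewrite to_complex_Zpoly_evalC Hrat; apply/eqP.
      move: Hroot; rewrite Hqq' map_polyZ rootZ //.
      by rewrite fmorph_eq0 invr_eq0 intr_eq0.
Qed.

Lemma Zpoly_evalC_real p a : Zpoly_evalC p (a, IZR Z0) = (Zpoly_evalR p a, IZR Z0).
Proof.
  elim: p => [|c p IH] //=; rewrite IH /Cadd /Cmul /=.
  by f_equal; ring.
Qed.

Lemma real_algebraic_complex a : real_algebraic a <-> algebraicOver ratr (a%:C)%C.
Proof.
  rewrite -to_complex_real -algebraic_to_complex.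
  split=> -[p [Hp Hev]]; exists p; split=> //.
  - by rewrite Zpoly_evalC_real Hev.
  - by move: Hev; rewrite Zpoly_evalC_real => -[].
Qed.


Notation algC := (algebraicOver (@ratr R[i])).

Lemma algC_rat r : algC (ratr r).
Proof. exact: algebraic_id. Qed.

Lemma conjc_ratr (r : rat) : ((ratr r : R[i])^*)%C = ratr r.
Proof. by rewrite /ratr fmorph_div /= !rmorph_int. Qed.

Lemma algC_conj x : algC x -> algC (x^*)%C.
Proof.
  move=> [q Hq Hroot]; exists q => //.
  by rewrite -complex_root_conj -map_poly_comp (eq_map_poly conjc_ratr).
Qed.

Lemma algC_i : algC 'i%C.
Proof.
  exists ('X^2 + 1); first by rewrite -size_poly_eq0 size_polyDl ?size_polyXn ?size_poly1.
  by rewrite rmorphD rmorph1 /= map_polyXn rootE !hornerE sqr_i addNr.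
Qed.

Lemma real_algebraic_add a b :
  real_algebraic a -> real_algebraic b -> real_algebraic (Rplus a b).
Proof. by rewrite RplusE !real_algebraic_complex rmorphD; apply: algebraic_add. Qed.

Lemma real_algebraic_opp a : real_algebraic a -> real_algebraic (Ropp a).
Proof. by rewrite RoppE !real_algebraic_complex rmorphN; apply: algebraic_opp. Qed.

Lemma algebraic_parts z : algebraic z <-> real_algebraic (fst z) /\ real_algebraic (snd z).
Proof.
  rewrite algebraic_to_complex !real_algebraic_complex; split.
  - move=> Hz; have Hc := algC_conj Hz.
    have Hhalf : algC (2%:R^-1) by apply: algebraic_inv; rewrite -(rmorph_nat ratr); apply: algC_rat.
    split.
    + have -> : ((fst z)%:C)%C = (to_complex z + (to_complex z)^*%C) / 2%:R by rewrite -ReJ_add.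
      exact: algebraic_mul (algebraic_add Hz Hc) Hhalf.
    + have -> : ((snd z)%:C)%C = ((to_complex z)^*%C - to_complex z) / 2%:R * 'i%C by rewrite -ImJ_sub.
      exact: algebraic_mul (algebraic_mul (algebraic_sub Hc Hz) Hhalf) algC_i.
  - move=> [Ha Hb]; rewrite [to_complex z]complexE.
    exact: algebraic_add Ha (algebraic_mul algC_i Hb).
Qed.

Definition mpoly1_poly (P : mpoly) : {poly R} :=
  foldr (fun m q => (fst m)%:P * 'X^(List.nth 0 (snd m) 0%N) + q) 0 P.

Lemma horner_mpoly1_poly P t : (mpoly1_poly P).[t] = mpoly_eval1 P t.
Proof.
  elim: P => [|m P IH]; first by rewrite horner0.
  rewrite /= hornerD hornerCM hornerXn IH -RpowE.
  by rewrite /mpoly_eval1 /= /mono_eval /= Rmult_1_l.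
Qed.

Lemma real_algebraic_mpoly1_poly_coef P i : mpoly_real_alg P -> real_algebraic (mpoly1_poly P)`_i.
Proof.
  elim: P => [|m P IH] HP; first by rewrite coef0; apply: (real_algebraic_Z Z0).
  inversion HP as [|? ? Hm HP']; subst.
  rewrite /= coefD coefCM coefXn; apply: real_algebraic_add; last exact: IH.
  by case: eqP => _; rewrite ?mulr1 ?mulr0 //; apply: (real_algebraic_Z Z0).
Qed.

Lemma real_algebraic_root (p : {poly R}) t : p != 0 -> root p t ->
  (forall i, real_algebraic p`_i) -> real_algebraic t.
Proof.
  move=> Hp Ht Hcoef; apply/real_algebraic_complex/integral_algebraic.
  apply: (integral_root (p := map_poly (real_complex R) p)).
  - by rewrite map_poly_eq0.
  - by rewrite rootE horner_map (rootP Ht) rmorph0.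
  - move=> _ /(nthP 0) [i _ <-]; rewrite coef_map.
    exact/integral_algebraic/real_algebraic_complex.
Qed.

Lemma mpoly_eval1_zeros_algebraic P : mpoly_real_alg P ->
  exists Z, Forall real_algebraic Z /\ zeros_within P Z.
Proof.
  move=> HP; have [H0|Hnz] := eqVneq (mpoly1_poly P) 0.
  - by exists nil; split=> //; left=> t; rewrite -horner_mpoly1_poly H0 horner0.
  - have Hroots t : (t \in rootsR (mpoly1_poly P)) = root (mpoly1_poly P) t.
      by rewrite -(roots_on_rootsR Hnz) in_itv.
    exists (rootsR (mpoly1_poly P)); split.
    + apply/Forall_forall => t /InP; rewrite Hroots => Ht.
      by apply: (real_algebraic_root Hnz Ht) => i; apply: real_algebraic_mpoly1_poly_coef.
    + by right=> t Ht; apply/InP; rewrite Hroots rootE horner_mpoly1_poly Ht.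
Qed.

End Algebraic.

(** * Periods of degree one *)

Lemma algebraic_list_union (A : Type) (L : list A) (P : A -> list R -> Prop) :
  (forall x Z Z', incl Z Z' -> P x Z -> P x Z') ->
  (forall x, In x L -> exists Z, Forall real_algebraic Z /\ P x Z) ->
  exists Z, Forall real_algebraic Z /\ forall x, In x L -> P x Z.
Proof.
  move=> Hmono; elim: L => [|x L IH] HL; first by exists nil.
  have [Zx [Hx HPx]] := HL x (or_introl erefl).
  have [Z [HZ HPZ]] := IH (fun y Hy => HL y (or_intror Hy)).
  exists (Zx ++ Z); split; first by apply/Forall_app.
  move=> y [<-|Hy].
  - by apply: Hmono HPx => w Hw; apply: in_or_app; left.
  - by apply: Hmono (HPZ y Hy) => w Hw; apply: in_or_app; right.
Qed.

Lemma description_zeros D : desc_real_alg D ->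
  exists Z, Forall real_algebraic Z /\ forall B c, In B D -> In c B -> zeros_within (fst c) Z.
Proof.
  move=> HD.
  have Hall c : In c (concat D) -> exists Z, Forall real_algebraic Z /\ zeros_within (fst c) Z.
    move=> /in_concat [B [HB Hc]]; apply: mpoly_eval1_zeros_algebraic.
    by move: HD => /Forall_forall /(_ B HB) /Forall_forall; apply.
  have [Z [HZ HcZ]] := algebraic_list_union (fun c => @zeros_within_incl (fst c)) Hall.
  by exists Z; split=> // B c HB Hc; apply: HcZ; apply/in_concat; exists B.
Qed.

Lemma total_length_algebraic I :
  Forall (fun p => real_algebraic (fst p) /\ real_algebraic (snd p)) I ->
  real_algebraic (total_length I).
Proof.
  elim=> [|p {}I [Ha Hb] _ IH]; first exact: (real_algebraic_Z Z0).
  exact/real_algebraic_add/IH/real_algebraic_add/real_algebraic_opp.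
Qed.

Lemma admissible_dim1_volume_algebraic S v :
  admissible 1 S -> lebesgue_volume 1 S v -> real_algebraic v.
Proof.
  move=> [[D [HD HSD]] _] Hv.
  have [Z [HZ HZroots]] := description_zeros HD.
  have [I [-> Hends]] := admissible_dim1_volume _ _ _ _ HSD HZroots Hv.
  have H0Z : Forall real_algebraic (0 :: Z) by constructor; [exact: (real_algebraic_Z Z0)|].
  apply: total_length_algebraic; apply: Forall_impl Hends => p [H1 H2].
  by split; apply: (proj1 (Forall_forall _ _) H0Z).
Qed.

Lemma real_period_dim1_iff a : real_period_dim 1 a <-> real_algebraic a.
Proof.
  split.
  - move=> [S1 [S2 [v1 [v2 [HS1 [HS2 [Hv1 [Hv2 ->]]]]]]]].
    apply: real_algebraic_add; first exact: admissible_dim1_volume_algebraic HS1 Hv1.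
    exact/real_algebraic_opp/(admissible_dim1_volume_algebraic HS2 Hv2).
  - move=> Ha; have [Hpos|Hneg] := Rle_dec 0 a; first exact: real_period_dim1_segment.
    rewrite -(Ropp_involutive a); apply/real_period_dim_opp/real_period_dim1_segment.
    + by lra.
    + exact: real_algebraic_opp.
Qed.

Lemma real_deg_is_0 a : real_deg_is a (Fin 0) <-> a = 0.
Proof.
  split; first by case=> [[]|[_ [[n [[<-] [Hn _]]]|[]]]] //; lia.
  by move=> ->; left.
Qed.

Lemma real_deg_is_1 a : real_deg_is a (Fin 1) <-> a <> 0 /\ real_algebraic a.
Proof.
  split.
  - case=> [[_ []]|[Ha [[n [[<-] [_ [Hper _]]]]|[]]]] //.
    by split; last exact/real_period_dim1_iff.
  - move=> [Ha Halg]; right; split=> //; left; exists 1%N.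
    split=> //; split; first lia.
    by split; [exact/real_period_dim1_iff | move=> m; lia].
Qed.

Lemma real_deg_is_algebraic a d :
  real_deg_is a (Fin d) -> (d <= 1)%N -> real_algebraic a.
Proof.
  case: d => [|[|d]] // Hdeg _; last by case/real_deg_is_1: Hdeg.
  by move/real_deg_is_0: Hdeg => ->; exact: (real_algebraic_Z Z0).
Qed.

Lemma real_algebraic_deg a : real_algebraic a ->
  real_deg_is a (Fin 0) /\ a = 0 \/ real_deg_is a (Fin 1) /\ a <> 0.
Proof.
  move=> Ha; have [->|Hne] := Req_dec a 0; first by left; split=> //; apply/real_deg_is_0.
  by right; split=> //; apply/real_deg_is_1.
Qed.

Lemma deg_is_parts p d : deg_is p (Fin d) ->
  exists x y, real_deg_is (fst p) (Fin x) /\ real_deg_is (snd p) (Fin y) /\ d = Nat.max x y.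
Proof. by case=> [[x|] [[y|] [Ha [Hb //= [->]]]]]; exists x, y. Qed.

Lemma deg_is_le1_algebraic p d : deg_is p (Fin d) -> (d <= 1)%N -> algebraic p.
Proof.
  move=> /deg_is_parts [x [y [Ha [Hb Hxy]]]] Hd; apply/algebraic_parts.
  by split; [apply: (real_deg_is_algebraic Ha) | apply: (real_deg_is_algebraic Hb)]; lia.
Qed.

Lemma real_deg_is_zero d : real_deg_is 0 (Fin d) -> d = 0%N.
Proof. by case=> [[_ [->]]|[]]. Qed.

Lemma deg_is_1 p : deg_is p (Fin 1) <-> p <> (0, 0) /\ algebraic p.
Proof.
  split.
  - move=> Hdeg; split; last exact: deg_is_le1_algebraic Hdeg _.
    move=> Hp; move: Hdeg; rewrite Hp => /deg_is_parts [x [y [Hx [Hy Hxy]]]].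
    by move: Hxy; rewrite (real_deg_is_zero Hx) (real_deg_is_zero Hy).
  - case: p => a b [Hnz /algebraic_parts /= [/real_algebraic_deg Ha /real_algebraic_deg Hb]].
    have Hdeg x y : real_deg_is a (Fin x) -> real_deg_is b (Fin y) -> Nat.max x y = 1%N ->
        deg_is (a, b) (Fin 1) by move=> Hx Hy Hxy; exists (Fin x), (Fin y); rewrite /= Hxy.
    case: Ha Hb => [[Ha a0]|[Ha _]] [[Hb b0]|[Hb _]]; try by apply: (Hdeg _ _ Ha Hb).
    by case: Hnz; rewrite a0 b0.
Qed.

Theorem mainTheorem3 :
  (forall p : Cpx, deg_is p (Fin 1) <-> (p <> (0, 0) /\ algebraic p)) /\
  (forall p : Cpx, algebraic p -> period p) /\
  (forall p : Cpx, period p -> (deg_is p (Fin 0) \/ deg_is p (Fin 1)) -> algebraic p).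
Proof.
  split; [exact: deg_is_1 | split].
  - move=> p /algebraic_parts [Ha Hb].
    by split; exists 1%N; split=> //; apply/real_period_dim1_iff.
  - by move=> p _ [] /deg_is_le1_algebraic; apply.
Qed.
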